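(* If $G$ is a $(3,2)$-critical graph that contains at least three odd cycles, then there exist two odd cycles of $G$ whose intersection is a path with at least one edge.
   Context: All graphs are finite and simple. An odd cycle is a cycle (subgraph) of odd length. For a graph $G$, ${\rm es}_{\chi}(G)$ is the minimum number of edges of $G$ whose removal results in a spanning subgraph $G_1$ with $\chi(G_1)=\chi(G)-1$. $G$ is edge-stability critical if ${\rm es}_{\chi}(G-e)<{\rm es}_{\chi}(G)$ for every edge $e$. $G$ is $(3,2)$-critical if it is edge-stability critical with $\chi(G)=3$ and ${\rm es}_{\chi}(G)=2$. *)

(* A finite simple graph is given by a vertex finType T and
   an edge set E : {set {set T}} whose elements are 2-element sets. *)
From mathcomp Require Import all_boot.
Set Implicit Arguments. Unset Strict Implicit. Unset Printing Implicit Defensive.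

Section Graphs.
Variable T : finType.

Definition simple_graph (E : {set {set T}}) : Prop :=
  forall e, e \in E -> #|e| = 2.

Definition colorable (E : {set {set T}}) (k : nat) : bool :=
  [exists f : {ffun T -> 'I_k},
     [forall e in E, forall x in e, forall y in e, (x != y) ==> (f x != f y)]].

(* chromatic number: least k such that E is k-colourable (vertex set T;
   #|T| colours always suffice for a simple graph) *)
Definition chi (E : {set {set T}}) : nat :=
  \big[minn/#|T|]_(k < #|T|.+1 | colorable E k) (k : nat).

(* es_chi: least number of edges F whose removal gives a spanning subgraph
   with chromatic number chi(E) - 1 (default #|E|+1 if no such F exists) *)
Definition es_chi (E : {set {set T}}) : nat :=
  \big[minn/#|E|.+1]_(F : {set {set T}} |
        (F \subset E) && (chi (E :\: F) == (chi E).-1)) #|F|.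

Definition es_critical (E : {set {set T}}) : Prop :=
  forall e, e \in E -> es_chi (E :\ e) < es_chi E.

Definition crit32 (E : {set {set T}}) : Prop :=
  [/\ es_critical E, chi E = 3 & es_chi E = 2].

Definition cycle_edges (s : seq T) : {set {set T}} :=
  [set [set x; next s x] | x in s].

Definition is_cycle (E : {set {set T}}) (C : {set {set T}}) : Prop :=
  exists s : seq T, [/\ uniq s, 3 <= size s, C = cycle_edges s & C \subset E].

Definition odd_cycle (E : {set {set T}}) (C : {set {set T}}) : Prop :=
  is_cycle E C /\ odd #|C|.

Definition verts (C : {set {set T}}) : {set T} := cover C.

Definition is_path_graph (V : {set T}) (F : {set {set T}}) : Prop :=
  exists p : seq T, [/\ uniq p, 2 <= size p, V = [set x in p] &
     F = [set e in [seq [set xy.1; xy.2] | xy <- zip p (behead p)]]].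

End Graphs.

(* Two distinct odd cycles C and D sharing an edge, with an edge of D outside C,
   give an ear of C: walking along D away from that edge until C is reached on
   both sides yields a path with both ends on C and no other vertex or edge in C.
   Its ends cut C into two arcs of different parities, so the ear closes an odd
   cycle with one of them, and that cycle meets C exactly in this arc.
   If instead the three given odd cycles are pairwise edge-disjoint, delete an
   edge e of the first: removing at most one more edge leaves one of the other
   two cycles intact, so the chromatic number cannot drop from 3, whence
   es_chi (E - e) >= 2 = es_chi E, contradicting criticality. *)

From HB Require Import structures.
From mathcomp Require Import all_boot.
Set Implicit Arguments. Unset Strict Implicit. Unset Printing Implicit Defensive.

(* Lets [bigD1] isolate a term of the minimum defining [chi]. *)
HB.instance Definition _ := SemiGroup.isComLaw.Build nat minn minnA minnC.

Section Colorings.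
Variable T : finType.
Implicit Types (E F : {set {set T}}) (k : nat).

Lemma colorableP E k :
  reflect (exists f : {ffun T -> 'I_k},
             forall e, e \in E -> {in e &, forall x y, x != y -> f x != f y})
          (colorable E k).
Proof.
apply: (iffP existsP) => -[f Hf]; exists f.
  move=> e eE x y xe ye.
  exact/implyP/(implyP (forallP (implyP (forallP (implyP (forallP Hf e) eE) x) xe) y)).
apply/forallP => e; apply/implyP => eE; apply/forallP => x; apply/implyP => xe.
by apply/forallP => y; apply/implyP => ye; apply/implyP; exact: (Hf e eE x y xe ye).
Qed.

Lemma colorable_card E : colorable E #|T|.
Proof.
apply/colorableP; exists [ffun x => enum_rank x] => e _ x y _ _ nxy.
by rewrite !ffunE; apply: contra nxy => /eqP /enum_rank_inj ->.
Qed.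

Lemma colorable_le E k k' : k <= k' -> colorable E k -> colorable E k'.
Proof.
move=> lekk' /colorableP [f Hf]; apply/colorableP.
exists [ffun x => widen_ord lekk' (f x)] => e eE x y xe ye nxy; rewrite !ffunE.
by apply: contra (Hf e eE x y xe ye nxy) => /eqP [] /val_inj ->.
Qed.

Lemma colorable_subset E F k : F \subset E -> colorable E k -> colorable F k.
Proof.
by move=> sFE /colorableP [f Hf]; apply/colorableP; exists f => e /(subsetP sFE); apply: Hf.
Qed.

Lemma chi_colorable E : colorable E (chi E).
Proof.
apply: (big_ind (colorable E)) => //; first exact: colorable_card.
by move=> k k' Hk Hk'; rewrite /minn; case: ifP.
Qed.

Lemma chi_min E k : colorable E k -> chi E <= k.
Proof.
move=> Ek; have [ltkT|leTk] := ltnP k #|T|.+1.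
  by rewrite /chi (bigD1 (Ordinal ltkT)) //= geq_minl.
apply: leq_trans (ltnW leTk); rewrite /chi.
apply: (big_ind (fun m => m <= #|T|)) => // [m m' le_m _|i _]; last by rewrite -ltnS.
exact: leq_trans (geq_minl m m') le_m.
Qed.

Lemma chi_subset E F : F \subset E -> chi F <= chi E.
Proof. by move=> sFE; apply/chi_min/(colorable_subset sFE)/chi_colorable. Qed.

Lemma chi_gt2 E : ~~ colorable E 2 -> 2 < chi E.
Proof.
by rewrite ltnNge; apply: contra => le_chi2; apply: colorable_le le_chi2 (chi_colorable E).
Qed.

End Colorings.

Lemma split_first_last (X : eqType) (P : pred X) l y0 z0 :
  y0 \in l -> z0 \in l -> P y0 -> P z0 -> y0 != z0 ->
  exists w2 y m x w1, [/\ l = w2 ++ y :: m ++ x :: w1, P y, P x, ~~ has P w2 & ~~ has P w1].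
Proof.
move=> y0l z0l Py0 Pz0 y0z0; have hl : has P l by apply/hasP; exists y0.
move: y0l z0l; case/split_find: hl => y w2 m Py w2P y0l z0l.
have [q [ql Pq qy]] : exists q, [/\ q \in rcons w2 y ++ m, P q & q != y].
  by case: (eqVneq y0 y) => [Dy|y0y]; [exists z0; split; rewrite // eq_sym -Dy | exists y0].
have hm : has P (rev m).
  rewrite has_rev; apply/hasP; exists q => //.
  move: ql; rewrite cat_rcons mem_cat inE (negbTE qy) /= => /orP [qw2|//].
  by move/hasPn: w2P => /(_ q qw2); rewrite Pq.
move Drm : (rev m) hm => rm hm; case/split_find: hm Drm => x w1 m1 Px w1P /(congr1 rev).
rewrite revK rev_cat rev_rcons => ->.
exists w2, y, (rev m1), x, (rev w1); split; rewrite ?has_rev //.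
by rewrite cat_rcons.
Qed.

Lemma disjoint_card_le1 (aT : finType) (A B F : {set aT}) :
  [disjoint A & B] -> #|F| <= 1 -> [disjoint A & F] \/ [disjoint B & F].
Proof.
rewrite -!setI_eq0 => dAB F_le1.
have [dAF|/set0Pn [f1 /setIP [f1A f1F]]] := eqVneq (A :&: F) set0; [by left | right].
apply/eqP/setP => f2; rewrite !inE; apply/andP => -[f2B f2F].
have := card_le1P F_le1 f1 f1F f2; rewrite f2F inE => /esym /eqP ef.
by move/eqP/setP: dAB => /(_ f1); rewrite !inE f1A -ef f2B.
Qed.

Section Cycles.
Variable T : finType.
Implicit Types (s t p : seq T) (x y z : T).

Definition path_edges p : {set {set T}} :=
  [set e in [seq [set xy.1; xy.2] | xy <- zip p (behead p)]].

Lemma path_edges1 x : path_edges [:: x] = set0.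
Proof. by apply/setP => e; rewrite !inE. Qed.

Lemma path_edges_cons x y p :
  path_edges [:: x, y & p] = [set x; y] |: path_edges (y :: p).
Proof. by apply/setP => e; rewrite !inE. Qed.

Lemma path_edges_cat x p y q :
  path_edges (x :: p ++ y :: q) = path_edges (x :: rcons p y) :|: path_edges (y :: q).
Proof.
elim: p x => [|z p IHp] x /=; first by rewrite !path_edges_cons path_edges1 setU0.
by rewrite !path_edges_cons IHp setUA.
Qed.

Lemma path_edges_rcons p x y :
  path_edges (rcons (rcons p x) y) = path_edges (rcons p x) :|: [set [set x; y]].
Proof.
case: p => [|z p]; first by rewrite /= path_edges_cons path_edges1 set0U setU0 setUC.
have -> : rcons (rcons (z :: p) x) y = z :: p ++ [:: x; y] by rewrite -!cats1 -catA.
by rewrite path_edges_cat path_edges_cons path_edges1 setU0.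
Qed.

Lemma path_edges_rev p : path_edges (rev p) = path_edges p.
Proof.
elim: p => [|x [|y p] IHp] //.
rewrite rev_cons rev_cons path_edges_rcons -rev_cons IHp path_edges_cons.
by rewrite setUC [[set y; x]]setUC.
Qed.

Lemma path_edges_frel (f : T -> T) x p : fpath f x p ->
  path_edges (x :: p) = [set [set z; f z] | z in belast x p].
Proof.
elim: p x => [|y p IHp] x /=.
  by move=> _; rewrite path_edges1; apply/setP => e; rewrite inE; apply/esym/imsetP => -[].
case/andP => /eqP <- /IHp {}IHp; rewrite path_edges_cons IHp.
apply/setP => e; rewrite !inE; apply/idP/imsetP => [/orP [/eqP ->|/imsetP [z zp ->]]|[z]].
- by exists x; rewrite ?mem_head.
- by exists z; rewrite // inE zp orbT.
- rewrite inE => /orP [/eqP -> ->|zp ->]; first by rewrite eqxx.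
  by rewrite (imset_f (fun z => [set z; f z])) ?orbT.
Qed.

Lemma cycle_edges_path x p : uniq (x :: p) ->
  cycle_edges (x :: p) = path_edges (x :: rcons p x).
Proof.
by move=> uxp; rewrite (path_edges_frel (cycle_next uxp)) belast_rcons.
Qed.

Lemma cycle_edges_cat y b x a : uniq (y :: b ++ x :: a) ->
  cycle_edges (y :: b ++ x :: a) = path_edges (y :: rcons b x) :|: path_edges (x :: rcons a y).
Proof. by move=> u; rewrite cycle_edges_path // rcons_cat rcons_cons path_edges_cat. Qed.

Lemma cycle_edges_rot n s : uniq s -> cycle_edges (rot n s) = cycle_edges s.
Proof.
move=> us; apply/setP => e; apply/imsetP/imsetP => -[z zs ->]; exists z;
  by rewrite ?next_rot ?mem_rot // -(mem_rot n).
Qed.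

Lemma mem_cycle_edges s e z : e \in cycle_edges s -> z \in e -> z \in s.
Proof. by case/imsetP => x xs -> /set2P [->|->]; rewrite ?mem_next. Qed.

Lemma verts_cycle_edges s : verts (cycle_edges s) = [set z in s].
Proof.
apply/setP => z; rewrite inE; apply/bigcupP/idP => [[e eC ze]|zs].
  exact: mem_cycle_edges eC ze.
by exists [set z; next s z]; [apply/imsetP; exists z | rewrite set21].
Qed.

Lemma next_neq s x : uniq s -> 1 < size s -> x \in s -> next s x != x.
Proof.
move=> us s_gt1 xs; have [i r rot_s] := rot_to xs.
rewrite -(next_rot i us) rot_s.
have : uniq (x :: r) /\ 1 < size (x :: r) by rewrite -rot_s rot_uniq size_rot.
case: r {rot_s} => [|y r] [] //=; rewrite eqxx inE negb_or eq_sym.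
by case/andP => /andP [].
Qed.

Lemma next_next_neq s x : uniq s -> 2 < size s -> x \in s -> next s (next s x) != x.
Proof.
move=> us s_gt2 xs; have [i r rot_s] := rot_to xs.
rewrite -!(next_rot i us) rot_s.
have : uniq (x :: r) /\ 2 < size (x :: r) by rewrite -rot_s rot_uniq size_rot.
case: r {rot_s} => [|y [|z r]] [] //= /and3P [].
rewrite !inE !negb_or => /and3P [xy xz _] /andP [yz _] _ _.
by rewrite eqxx [y == x]eq_sym (negbTE xy) eqxx eq_sym.
Qed.

Lemma card_cycle_edges s : uniq s -> 2 < size s -> #|cycle_edges s| = size s.
Proof.
move=> us s_gt2; rewrite card_in_imset; first exact/card_uniqP.
move=> x y xs ys exy; apply: contraTeq (next_next_neq us s_gt2 xs) => nxy.
have : x \in [set y; next s y] by rewrite -exy set21.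
have : y \in [set x; next s x] by rewrite exy set21.
rewrite !inE (negbTE nxy) eq_sym (negbTE nxy) /= => /eqP ynext /eqP xnext.
by rewrite -ynext -xnext eqxx.
Qed.

Lemma rot_to_edge t e : uniq t -> 1 < size t -> e \in cycle_edges t ->
  exists u v r, [/\ e = [set u; v], uniq (v :: rcons r u)
                   & cycle_edges (v :: rcons r u) = cycle_edges t].
Proof.
move=> ut t_gt1 /imsetP [u ut' ->]; have [i r rot_t] := rot_to ut'.
have : 1 < size (u :: r) by rewrite -rot_t size_rot.
case: r rot_t => [|v r] // rot_t _.
have Dt' : rot 1 (rot i t) = v :: rcons r u by rewrite rot_t rot1_cons.
exists u, v, r; rewrite -Dt' !rot_uniq !cycle_edges_rot ?rot_uniq //; split=> //.
by rewrite -(next_rot i ut) rot_t /= eqxx.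
Qed.

Section OddCycles.
Implicit Types (E F C : {set {set T}}).

Lemma odd_cycle_seq E C : odd_cycle E C ->
  exists s, [/\ uniq s, 2 < size s, odd (size s), C = cycle_edges s & C \subset E].
Proof.
by case=> -[s [us s_gt2 DC sCE]] oC; exists s; split; rewrite // -card_cycle_edges // -DC.
Qed.

Lemma odd_cycle_sub E C : odd_cycle E C -> C \subset E.
Proof. by case=> -[s []]. Qed.

Lemma odd_cycle_edges E s : uniq s -> 1 < size s -> odd (size s) ->
  cycle_edges s \subset E -> odd_cycle E (cycle_edges s).
Proof.
move=> us s_gt1 os sCE; have s_gt2 : 2 < size s by case: (size s) s_gt1 os => [|[|[]]].
by split; [exists s | rewrite card_cycle_edges].
Qed.

Lemma odd_cycle_subset E F C : C \subset F -> odd_cycle E C -> odd_cycle F C.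
Proof. by move=> sCF [[s [? ? DC _]] ?]; split=> //; exists s. Qed.

Lemma odd_cycle_neq0 E C : odd_cycle E C -> C != set0.
Proof. by case=> _ oC; rewrite -card_gt0; case: #|C| oC. Qed.

Lemma odd_cycle_setD E F C : odd_cycle E C -> [disjoint C & F] -> odd_cycle (E :\: F) C.
Proof. by move=> oC dCF; apply: odd_cycle_subset (oC); rewrite subsetD odd_cycle_sub. Qed.

Lemma path_alternating (g : T -> bool) x p : path (fun y z => g y != g z) x p ->
  g (last x p) = g x (+) odd (size p).
Proof.
elim: p x => [|y p IHp] x /=; first by rewrite addbF.
by case/andP => + /IHp ->; rewrite /=; case: (g x) (g y) (odd (size p)) => [] [] [].
Qed.

Lemma odd_cycle_not_colorable2 E C : odd_cycle E C -> ~~ colorable E 2.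
Proof.
case/odd_cycle_seq => s [us s_gt2 os -> sCE]; apply/colorableP => -[f Hf].
pose g z := odd (f z).
have alt : cycle (fun y z => g y != g z) s.
  apply: (cycle_from_next us) => z zs.
  have eE : [set z; next s z] \in E by apply: (subsetP sCE); apply/imsetP; exists z.
  have := Hf _ eE z (next s z) (set21 _ _) (set22 _ _).
  rewrite eq_sym next_neq ?(ltnW s_gt2) // => /(_ isT).
  by rewrite /g; case: (f z) (f (next s z)) => [[|[|?]] ?] [[|[|?]] ?].
case: s us s_gt2 os sCE alt => // x p _ _ /= os _.
by rewrite -cats1 => /path_alternating; rewrite last_cat size_cat addn1 /= os addbT; case: (g x).
Qed.

Definition odd_cycles_meet_in_path E :=
  exists C1 C2, [/\ odd_cycle E C1, odd_cycle E C2, C1 != C2 &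
                    is_path_graph (verts C1 :&: verts C2) (C1 :&: C2)].

(* The ear is the path [x :: rcons w y]; when it is a single edge, that edge
   must be a chord of [C]. *)
Definition ear C x w y :=
  [/\ x \in verts C, y \in verts C, uniq (x :: rcons w y), [disjoint w & verts C]
    & w = [::] -> [set x; y] \notin C].

Lemma ear_rev C x w y : ear C x w y -> ear C y (rev w) x.
Proof.
case=> xC yC uxwy dwC w0; split=> //.
- by rewrite -rev_cons -rev_rcons rev_uniq.
- by rewrite (eq_disjoint (mem_rev w)).
- by move/(congr1 rev); rewrite revK setUC => /w0.
Qed.

Lemma path_edges_meet_interior x w y e : e \in path_edges (x :: rcons w y) ->
  w = [::] \/ exists2 z, z \in w & z \in e.
Proof.
elim: w x => [|z w IHw] x; first by left.
rewrite rcons_cons path_edges_cons in_setU in_set1 => /orP [/eqP ->|ePw].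
  by right; exists z; rewrite ?mem_head ?set22.
have [w0|[z' z'w z'e]] := IHw _ ePw; right; last by exists z'; rewrite // inE z'w orbT.
exists z; rewrite ?mem_head //.
by move: ePw; rewrite w0 path_edges_cons path_edges1 setU0 => /set1P ->; rewrite set21.
Qed.

Lemma ear_edges_disjoint C x w y : ear C x w y -> path_edges (x :: rcons w y) :&: C = set0.
Proof.
case=> _ _ _ dwC w0; apply/setP => e; rewrite inE in_set0; apply/andP => -[eP eC].
have [w_nil|[z zw ze]] := path_edges_meet_interior eP.
  move: eP; rewrite w_nil path_edges_cons path_edges1 setU0 => /set1P exy.
  by have := w0 w_nil; rewrite -exy eC.
have zC : z \in verts C by apply/bigcupP; exists e.
by rewrite (disjointFr dwC zw) in zC.
Qed.

(* The ear closes the cycle [y :: b ++ x :: w] with the arc [y :: rcons b x]. *)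
Lemma odd_cycle_ear_arc E x y a b w :
  uniq (y :: b ++ x :: a) -> odd (size a + size b) ->
  cycle_edges (y :: b ++ x :: a) \subset E ->
  ear (cycle_edges (y :: b ++ x :: a)) x w y -> path_edges (x :: rcons w y) \subset E ->
  odd (size w + size b) -> odd_cycles_meet_in_path E.
Proof.
set s := y :: b ++ x :: a; set c := y :: b ++ x :: w.
set B := path_edges (y :: rcons b x); set P := path_edges (x :: rcons w y).
move=> us oab sE earP PE owb.
have P_s := ear_edges_disjoint earP.
case: earP => _ _ uP dwC _.
have Ds : s = (y :: rcons b x) ++ a by rewrite /= cat_rcons.
have Dc : c = (y :: rcons b x) ++ w by rewrite /= cat_rcons.
have uc : uniq c.
  move: us; rewrite Dc Ds !cat_uniq => /and3P [-> _ _] /=.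
  have uw : uniq w by move: uP; rewrite cons_uniq rcons_uniq => /and3P [].
  rewrite uw andbT; apply/hasPn => z zw; apply: contraFN (disjointFr dwC zw).
  by rewrite verts_cycle_edges inE Ds mem_cat => ->.
have Cs : cycle_edges s = B :|: path_edges (x :: rcons a y) := cycle_edges_cat us.
have Cc : cycle_edges c = B :|: P := cycle_edges_cat uc.
have size_s : size s = (size a + size b).+2 by rewrite /s /= size_cat /= addnS addnC.
have size_c : size c = (size w + size b).+2 by rewrite /c /= size_cat /= addnS addnC.
exists (cycle_edges s), (cycle_edges c); split.
- by apply: odd_cycle_edges; rewrite // size_s /= ?negbK.
- apply: odd_cycle_edges; rewrite // ?size_c /= ?negbK //.
  by rewrite Cc subUset PE (subset_trans _ sE) // Cs subsetUl.
- apply/eqP => eq_sc.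
  have xP : [set x; head y w] \in P.
    by rewrite /P; case: (w) => [|z w'] /=; rewrite path_edges_cons setU11.
  have : [set x; head y w] \in P :&: cycle_edges s by rewrite inE xP eq_sc Cc inE xP orbT.
  by rewrite P_s inE.
- exists (y :: rcons b x); split.
  + by move: us; rewrite Ds cat_uniq => /andP [].
  + by rewrite /= size_rcons.
  + apply/setP => z; rewrite inE !verts_cycle_edges !in_set.
    have -> : (z \in c) = (z \in y :: rcons b x) || (z \in w) by rewrite Dc mem_cat.
    have z_s : z \in y :: rcons b x -> z \in s by rewrite Ds mem_cat => ->.
    have [zw|_] := boolP (z \in w); last by rewrite orbF andb_idl.
    have := disjointFr dwC zw; rewrite verts_cycle_edges inE => zNs.
    by rewrite zNs; apply/esym/negbTE; apply: contraFN zNs.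
  + rewrite Cs Cc -setUIr (_ : _ :&: P = set0) ?setU0 //.
    by apply/eqP; rewrite -subset0 -P_s setIC setIS // Cs subsetUr.
Qed.

Lemma odd_cycle_ear E C x w y : odd_cycle E C -> ear C x w y ->
  path_edges (x :: rcons w y) \subset E -> odd_cycles_meet_in_path E.
Proof.
case/odd_cycle_seq => s [us _ os -> sE] earP PE.
have [xC yC uP _ _] := earP; rewrite verts_cycle_edges !inE in xC yC.
have xy : x != y by apply: contraTneq uP => ->; rewrite /= mem_rcons mem_head.
have [i s' rot_s] := rot_to yC.
have xs' : x \in s' by move: xC; rewrite -(mem_rot i) rot_s inE (negbTE xy).
case/splitPr: xs' rot_s => b a rot_s.
have uyx : uniq (y :: b ++ x :: a) by rewrite -rot_s rot_uniq.
have Cyx : cycle_edges (y :: b ++ x :: a) = cycle_edges s by rewrite -rot_s cycle_edges_rot.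
have oab : odd (size a + size b).
  by move: os; rewrite -(size_rot i) rot_s /= size_cat /= addnS addnC /= negbK.
(* The arcs [b] and [a] have different parities, so one of them closes an odd cycle. *)
have [owb|ewb] := boolP (odd (size w + size b)).
  by apply: (@odd_cycle_ear_arc E x y a b w); rewrite ?Cyx.
have rot_yx : rot (size (y :: b)) (y :: b ++ x :: a) = x :: a ++ y :: b.
  by rewrite -cat_cons rot_size_cat.
have Cxy : cycle_edges (x :: a ++ y :: b) = cycle_edges s by rewrite -rot_yx cycle_edges_rot.
apply: (@odd_cycle_ear_arc E y x b a (rev w)); rewrite ?Cxy.
- by rewrite -rot_yx rot_uniq.
- by rewrite addnC.
- by [].
- exact: ear_rev.
- by rewrite -rev_cons -rev_rcons path_edges_rev.
- by move: oab ewb; rewrite size_rev !oddD; case: odd; case: odd; case: odd.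
Qed.

Lemma exists_ear E C D : is_cycle E C -> is_cycle E D ->
  ~~ [disjoint C & D] -> ~~ (D \subset C) ->
  exists x w y, ear C x w y /\ path_edges (x :: rcons w y) \subset D.
Proof.
move=> [s [us s_gt2 -> _]] [t [ut t_gt2 -> _]].
rewrite -setI_eq0 => /set0Pn [e0 /setIP [e0s e0t]].
case/subsetPn => e1 e1t e1s.
(* Make [e1] the closing edge of [t]; the ear is the part of [t] around [e1]
   between the last and the first vertex of [s]. *)
have [u [v [r [De1 ut' Ct']]]] := rot_to_edge ut (ltnW t_gt2) e1t.
set t' := v :: rcons r u in ut' Ct'; rewrite -{}Ct' in e0t *.
have [z zs De0] := imsetP e0s.
have [zt z't] : z \in t' /\ next s z \in t'.
  by split; apply: (mem_cycle_edges e0t); rewrite De0 ?set21 ?set22.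
have z'z : z != next s z by rewrite eq_sym next_neq // ltnW.
have [w2 [y [m [x [w1 [Dt' ys xs w2s w1s]]]]]] :=
  split_first_last zt z't zs (etrans (mem_next s z) zs) z'z.
have rot_t' : rot (size (w2 ++ y :: m)) t' = x :: rcons (w1 ++ w2) y ++ m.
  by rewrite Dt' -cat_cons catA rot_size_cat cat_rcons -catA.
have ut'' := ut'; rewrite -(rot_uniq (size (w2 ++ y :: m))) rot_t' in ut''.
exists x, (w1 ++ w2), y; split.
  split; rewrite ?verts_cycle_edges ?inE //.
  - by move: ut''; rewrite -cat_cons cat_uniq => /andP [].
  - have eq_s : [in [set z0 in s]] =1 mem s by move=> z0; rewrite inE.
    by rewrite disjoint_cat !disjoint_has !(eq_has eq_s) w1s.
  - case: w1 w2 Dt' {ut'' rot_t' w1s w2s} => [|? ?] [|? ?] // Dt' _.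
    have := congr1 (head x) Dt'; have := congr1 (last x) Dt'.
    rewrite /= last_rcons last_cat /= => <- <-.
    by rewrite -De1.
rewrite -(cycle_edges_rot (size (w2 ++ y :: m)) ut') rot_t' cat_rcons cycle_edges_cat ?subsetUl //.
by rewrite -cat_rcons.
Qed.

Lemma odd_cycles_sharing_edge E C C' :
  odd_cycle E C -> odd_cycle E C' -> C != C' -> ~~ [disjoint C & C'] ->
  odd_cycles_meet_in_path E.
Proof.
wlog nsub : C C' / ~~ (C' \subset C) => [sym oC oC' nCC' CC'|].
  have [sC'C|] := boolP (C' \subset C); last by move/sym; apply.
  apply: (sym C' C) => //; first by apply: contra nCC' => sCC'; rewrite eqEsubset sCC'.
    by rewrite eq_sym.
  by rewrite disjoint_sym.
move=> oC oC' _ CC'; have [[cC _] [cC' _]] := (oC, oC').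
have [x [w [y [earP PC']]]] := exists_ear cC cC' CC' nsub.
exact: odd_cycle_ear oC earP (subset_trans PC' (odd_cycle_sub oC')).
Qed.

Lemma es_chi_gt1 E C1 C2 : chi E <= 3 -> odd_cycle E C1 -> odd_cycle E C2 ->
  [disjoint C1 & C2] -> 1 < es_chi E.
Proof.
move=> chiE3 o1 o2 d12; apply: (big_ind (fun m => 1 < m)) => [||F].
- rewrite ltnS card_gt0; apply: contraNneq (odd_cycle_neq0 o1) => E0.
  by rewrite -subset0 -E0 (odd_cycle_sub o1).
- by move=> m m' ? ?; rewrite leq_min; apply/andP.
case/andP => _ /eqP chiF; rewrite ltnNge; apply/negP => F_le1.
have [C [oC dCF]] : exists C, odd_cycle E C /\ [disjoint C & F].
  by case: (disjoint_card_le1 d12 F_le1) => ?; [exists C1 | exists C2].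
have := chi_gt2 (odd_cycle_not_colorable2 (odd_cycle_setD oC dCF)); rewrite chiF.
by case: (chi E) chiE3 => [|[|[|[]]]].
Qed.

End OddCycles.

End Cycles.

Theorem lemma2p5 (T : finType) (E : {set {set T}}) :
  simple_graph E ->
  crit32 E ->
  (exists C1 C2 C3, [/\ odd_cycle E C1, odd_cycle E C2, odd_cycle E C3 &
                       [/\ C1 != C2, C1 != C3 & C2 != C3]]) ->
  exists C1 C2, [/\ odd_cycle E C1, odd_cycle E C2, C1 != C2 &
                    is_path_graph (verts C1 :&: verts C2) (C1 :&: C2)].
Proof.
move=> _ [crit chi3 es2] [C1 [C2 [C3 [o1 o2 o3 [n12 n13 n23]]]]].
have [d12|] := boolP [disjoint C1 & C2]; last exact: odd_cycles_sharing_edge o1 o2 n12.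
have [d13|] := boolP [disjoint C1 & C3]; last exact: odd_cycles_sharing_edge o1 o3 n13.
have [d23|] := boolP [disjoint C2 & C3]; last exact: odd_cycles_sharing_edge o2 o3 n23.
exfalso; have /set0Pn [e eC1] := odd_cycle_neq0 o1.
have eE : e \in E := subsetP (odd_cycle_sub o1) e eC1.
have avoid_e (C : {set {set T}}) : [disjoint C1 & C] -> odd_cycle E C -> odd_cycle (E :\ e) C.
  by move=> d1C oC; apply: odd_cycle_setD; rewrite // disjoint_sym disjoints1 (disjointFr d1C eC1).
have chi_e : chi (E :\ e) <= 3 by rewrite -chi3 chi_subset // subD1set.
have := crit e eE; rewrite es2 ltnNge.
by rewrite (es_chi_gt1 chi_e (avoid_e _ d12 o2) (avoid_e _ d13 o3) d23).
Qed.
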